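(* Consider stochastic ORBCD as described in the context with $\eta_t = \sqrt{t} + L$, where $L=\max_jL_j$, with $i_t$ and $j_t$ sampled independently and uniformly from $\{1,\dots,I\}$ and $\{1,\dots,J\}$ respectively, and let $\bar{\mathbf{x}}^T = \frac{1}{T}\sum_{t=1}^T \mathbf{x}^t$. Suppose the block-wise Lipschitz assumption and the boundedness assumption hold. Then for every $\mathbf{x}\in\mathbb{R}^n$, \[ \mathbb{E}_{\xi}[f(\bar{\mathbf{x}}^T) + g(\bar{\mathbf{x}}^T)] - [f(\mathbf{x}) + g(\mathbf{x})] \le \frac{J\big( \frac{\sqrt{T} + L}{2}D^2 + \sqrt{T}R_f^2 + g(\mathbf{x}^1) - g(\mathbf{x}^* )\big)}{T}. \]
   Context: Problem: minimize $f(\mathbf{x})+g(\mathbf{x})$ with $f=\frac1I\sum_{i=1}^I f_i$, each $f_i:\mathbb{R}^n\to\mathbb{R}$ convex and differentiable, and $g(\mathbf{x})=\sum_{j=1}^J g_j(\mathbf{x}_j)$ with each $g_j$ convex; the minimum is attained at $\mathbf{x}^*$. Here $\mathbf{x}$ is partitioned into $J$ non-overlapping blocks $\mathbf{x}_j\in\mathbb{R}^{n_j}$, $U_j\in\mathbb{R}^{n\times n_j}$ are the corresponding columns of an $n\times n$ permutation matrix, $\mathbf{x}=\sum_jU_j\mathbf{x}_j$, $\mathbf{x}_j=U_j^T\mathbf{x}$, $\nabla_j f=U_j^T\nabla f$. ORBCD (stochastic): $\mathbf{x}^1=\mathbf{0}$; at iteration $t$, pick $i_t$ and $j_t$, set $\mathbf{x}_{j_t}^{t+1}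 = \arg\min_{\mathbf{x}_{j_t}} \langle \nabla_{j_t} f_{i_t}(\mathbf{x}^t), \mathbf{x}_{j_t}\rangle + g_{j_t}(\mathbf{x}_{j_t}) + \frac{\eta_t}{2}\|\mathbf{x}_{j_t}-\mathbf{x}^t_{j_t}\|_2^2$ and $\mathbf{x}^{t+1} = \mathbf{x}^t + U_{j_t}(\mathbf{x}^{t+1}_{j_t}-\mathbf{x}^t_{j_t})$. $\xi=\{(i_1,j_1),\dots,(i_{t-1},j_{t-1})\}$ denotes the history of random choices. Block-wise Lipschitz assumption: $\|\nabla_j f_i(\mathbf{x}+U_jh_j)-\nabla_j f_i(\mathbf{x})\|_2\le L_j\|h_j\|_2\le L\|h_j\|_2$ for all $i,j,\mathbf{x},h_j$, $L=\max_jL_j$. Boundedness assumption: $\|\nabla f_i(\mathbf{x}^t)\|_2\le R_f$ for all $i,t$, and all iterates lie in a set $\mathcal{X}$ of diameter $D$. *)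

From HB Require Import structures.
From mathcomp Require Import all_boot all_order all_algebra.
From mathcomp Require Import all_classical all_reals all_analysis.
Unset Printing Implicit Defensive.
Import Order.TTheory GRing.Theory Num.Theory.
Import numFieldNormedType.Exports.
Local Open Scope ring_scope.

Section ORBCD.
Variable R : realType.
Variables (n J : nat) (blk : 'I_n -> 'I_J).
(* blk k = the block containing coordinate k; blocks are non-overlapping. *)

(* index set of block j; R^{n_j} is represented as functions blockT j -> R *)
Definition blockT (j : 'I_J) := {k : 'I_n | blk k == j}.
Definition bvec (j : 'I_J) := blockT j -> R.

Definition restr (x : 'rV[R]_n) (j : 'I_J) : bvec j := fun k => x ord0 (val k).
Definition ext (j : 'I_J) (h : bvec j) : 'rV[R]_n :=
  \row_k oapp h 0 (insub k : option (blockT j)).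

Definition norm2 (v : 'rV[R]_n) : R := Num.sqrt (\sum_k v ord0 k ^+ 2).
Definition bnorm2 (j : 'I_J) (h : bvec j) : R := Num.sqrt (\sum_(k : blockT j) h k ^+ 2).
Definition bdot (j : 'I_J) (u v : bvec j) : R := \sum_(k : blockT j) u k * v k.

Definition grad (F : 'rV[R]_n -> R) (x : 'rV[R]_n) : 'rV[R]_n :=
  \row_k ('d F x) (delta_mx ord0 k).
Definition bgrad (F : 'rV[R]_n -> R) (x : 'rV[R]_n) (j : 'I_J) : bvec j :=
  restr (grad F x) j.

Definition convex_fun (F : 'rV[R]_n -> R) : Prop :=
  forall (a b : 'rV[R]_n) (t : R), 0 <= t <= 1 ->
    F (t *: a + (1 - t) *: b) <= t * F a + (1 - t) * F b.
Definition convex_bfun (j : 'I_J) (G : bvec j -> R) : Prop :=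
  forall (a b : bvec j) (t : R), 0 <= t <= 1 ->
    G (fun k => t * a k + (1 - t) * b k) <= t * G a + (1 - t) * G b.

Definition gsum (gj : forall j : 'I_J, bvec j -> R) (x : 'rV[R]_n) : R :=
  \sum_j gj j (restr x j).

Definition eta (L : R) (t : nat) : R := Num.sqrt (t%:R) + L.

Definition orbcd_step (L : R) (gj : forall j : 'I_J, bvec j -> R)
    (F : 'rV[R]_n -> R) (t : nat) (j : 'I_J) (x x' : 'rV[R]_n) : Prop :=
  (forall k, blk k != j -> x' ord0 k = x ord0 k) /\
  let obj := fun y : bvec j =>
    bdot j (bgrad F x j) y + gj j y
    + eta L t / 2 * bnorm2 j (fun k => y k - restr x j k) ^+ 2 in
  forall y : bvec j, obj (restr x' j) <= obj y.

(* Iterates driven by a sequence of choices c : c k = (i_{k+1}, j_{k+1}).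
   iterates step c k = x^{k+1}; in particular iterates step c 0 = x^1 = 0. *)
Variable I : nat.
Fixpoint iterates (step : nat -> 'I_I -> 'I_J -> 'rV[R]_n -> 'rV[R]_n)
    (c : nat -> 'I_I * 'I_J) (k : nat) : 'rV[R]_n :=
  match k with
  | 0 => 0
  | k'.+1 => step k (c k').1 (c k').2 (iterates step c k')
  end.

Definition xbar step (c : nat -> 'I_I * 'I_J) (T : nat) : 'rV[R]_n :=
  (T%:R)^-1 *: \sum_(k < T) iterates step c k.

End ORBCD.

(* Expectation over the history xi of T independent uniform choices in the
   finite set A (here A = 'I_I * 'I_J); d is an (irrelevant) default value used
   to extend a length-T history to an infinite sequence. *)
Definition Exp (R : realType) (A : finType) (d : A) (T : nat)
    (Fx : (nat -> A) -> R) : R :=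
  ((#|A|%:R : R) ^+ T)^-1 * \sum_(s : T.-tuple A) Fx (fun k => nth d s k).

From Pilot Require Import Defs.
From HB Require Import structures.
From mathcomp Require Import all_boot all_order all_algebra.
From mathcomp Require Import all_classical all_reals all_analysis.
From mathcomp Require Import ring lra.
Set Implicit Arguments.
Unset Strict Implicit.
Unset Printing Implicit Defensive.

Import Order.TTheory GRing.Theory Num.Theory.
Import numFieldNormedType.Exports.
Local Open Scope ring_scope.

(* Along any history, optimality of the proximal block step, convexity of the [f_i] and [g_j]
   and Young's inequality (with [|grad f_i| <= Rf]) give a one-step inequality whose average
   over the fresh choice [(i_t, j_t)] reads
     (F(x^t) - F(x^* )) / J + E g(x^(t+1)) - g(x^t)
       <= eta_t / 2 (|x^* - x^t|^2 - E |x^* - x^(t+1)|^2) + Rf^2 / (2 eta_t);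
   averaging over [j_t] is what turns the block linearizations into the full one. Summed over
   [t], the distances telescope because [eta_t] is nondecreasing, the [g]-terms telescope to
   [g(x^(T+1)) - g(x^1)], and [g(x^(T+1))] is bounded below through [F(x^* ) <= F(x^(T+1))] and
   one more Young step. Then [sum_t 1 / (2 eta_t) <= sqrt T] and Jensen's inequality for the
   averaged iterate conclude. *)

Section RealFacts.
Variable R : realFieldType.

Lemma ge0_of_small_quadratic (a b : R) : 0 <= b ->
  (forall s, 0 < s -> s <= 1 -> 0 <= s * a + s ^+ 2 * b) -> 0 <= a.
Proof.
move=> b0 H; rewrite leNgt; apply/negP => a0.
have ba : 0 < b - a by lra.
pose s := - a / (b - a).
have s0 : 0 < s by rewrite divr_gt0 // oppr_gt0.
have s1 : s <= 1 by rewrite ler_pdivrMr // mul1r; lra.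
have := H s s0 s1.
have -> : s * a + s ^+ 2 * b = s * (- (a ^+ 2) / (b - a)) by rewrite /s; field; lra.
rewrite pmulr_rge0 //.
have : - (a ^+ 2) / (b - a) < 0 by rewrite ltr_pdivrMr // mul0r; nra.
lra.
Qed.

Lemma sum_weighted_telescope_le (e d : nat -> R) (M : R) (T : nat) :
  (0 < T)%N -> (forall t, 0 <= e t) -> (forall t, e t <= e t.+1) ->
  (forall t, d t <= M) ->
  \sum_(t < T) e t.+1 * (d t - d t.+1) <= e T * M - e T * d T.
Proof.
move=> + e0 em dM; elim: T => // -[_ _|T IH _].
  by rewrite big_ord1; have := dM 0%N; have := e0 1%N; nra.
rewrite big_ord_recr /=; have := IH isT.
have := em T.+1; have := dM T.+1; have := e0 T.+1; nra.
Qed.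

End RealFacts.

Section SqrtSum.
Variable R : rcfType.

Lemma inv_sqrt_step_le (a b : R) : 0 < a -> a <= b -> b ^+ 2 - a ^+ 2 = 1 ->
  b^-1 - (2 * a)^-1 <= b - a.
Proof.
move=> a0 ab h.
have b0 : 0 < b by lra.
have -> : b^-1 - (2 * a)^-1 = (2 * a - b) / (2 * a * b) by field; lra.
rewrite ler_pdivrMr; last by apply: mulr_gt0 => //; lra.
have e1 : (b - a) * (a + b) = 1 by rewrite -h; ring.
(* multiplying by [(b - a) (a + b) = 1] makes both sides homogeneous cubics *)
have -> : 2 * a - b = (2 * a - b) * ((b - a) * (a + b)) by rewrite e1 mulr1.
rewrite -subr_ge0.
have -> : (b - a) * (2 * a * b) - (2 * a - b) * ((b - a) * (a + b))
  = (b - a) ^+ 2 * (b + 2 * a) by ring.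
by apply: mulr_ge0; [exact: sqr_ge0 | lra].
Qed.

Lemma sum_inv_sqrt_le (T : nat) : (0 < T)%N ->
  \sum_(t < T) (2 * Num.sqrt t.+1%:R)^-1 + (2 * Num.sqrt (T%:R : R))^-1
    <= Num.sqrt T%:R.
Proof.
elim: T => // -[_ _|T IH _].
  by rewrite big_ord1 sqrtr1 mulr1 -mulr2n -[_ *+ 2]mulr_natr mulVf.
rewrite big_ord_recr /=; have := IH isT.
have a0 : 0 < Num.sqrt (T.+1%:R : R) by rewrite sqrtr_gt0 ltr0n.
have ab : Num.sqrt (T.+1%:R : R) <= Num.sqrt T.+2%:R by rewrite ler_sqrt ?ler0n // ler_nat.
have h : Num.sqrt (T.+2%:R : R) ^+ 2 - Num.sqrt T.+1%:R ^+ 2 = 1.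
  by rewrite !sqr_sqrtr ?ler0n // -natrB // subSnn.
have := inv_sqrt_step_le a0 ab h.
have b0 : 0 < Num.sqrt (T.+2%:R : R) by lra.
have -> : (2 * Num.sqrt (T.+2%:R : R))^-1 = (Num.sqrt T.+2%:R)^-1 / 2 by rewrite invfM mulrC.
lra.
Qed.

End SqrtSum.

Section Euclidean.
Local Open Scope classical_set_scope.
Variables (R : realType) (n : nat).
Implicit Types (u v w y z : 'rV[R]_n) (F : 'rV[R]_n -> R).

Definition sqnorm v : R := \sum_k v ord0 k ^+ 2.
Definition dotv u v : R := \sum_k u ord0 k * v ord0 k.

Lemma sqnorm_ge0 v : 0 <= sqnorm v.
Proof. by apply: sumr_ge0 => k _; exact: sqr_ge0. Qed.

Lemma norm2_sqr v : norm2 R n v ^+ 2 = sqnorm v.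
Proof. by rewrite sqr_sqrtr // sqnorm_ge0. Qed.

Lemma sqnorm_le_sqr v (B : R) : norm2 R n v <= B -> sqnorm v <= B ^+ 2.
Proof. by rewrite -norm2_sqr => vB; have : 0 <= norm2 R n v := sqrtr_ge0 _; nra. Qed.

Lemma dotv_ge_young u w (e : R) : 0 < e ->
  - (sqnorm u / (2 * e) + e / 2 * sqnorm w) <= dotv u w.
Proof.
move=> e0; rewrite /sqnorm /dotv mulr_suml mulr_sumr -big_split -sumrN.
apply: ler_sum => k _; rewrite -subr_ge0.
have -> : u ord0 k * w ord0 k - - (u ord0 k ^+ 2 / (2 * e) + e / 2 * w ord0 k ^+ 2)
    = (u ord0 k + e * w ord0 k) ^+ 2 / (2 * e) by field; lra.
by apply: divr_ge0; [exact: sqr_ge0 | lra].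
Qed.

Lemma diff_dotv_grad F z v : 'd F z v = dotv (grad R n F z) v.
Proof.
rewrite {1}[v]matrix_sum_delta big_ord1 linear_sum; apply: eq_bigr => k _.
by rewrite linearZ /= /grad mxE mulrC.
Qed.

Lemma convex_diff_le F z y : convex_fun R n F -> differentiable F z ->
  F z + 'd F z (y - z) <= F y.
Proof.
move=> cF dF; rewrite -(deriveE (y - z) dF) -lerBrDl.
(* by convexity, the difference quotients along [y - z] are at most [F y - F z] for [h] in (0, 1] *)
apply: (@cvgr_to_le _ 0^'+ _ R).
  by apply: cvg_dnbhs_at_right; exact: diff_derivable.
near=> h.
have h0 : 0 < h by near: h; exact: nbhs_right_gt.
have h1 : h <= 1 by near: h; apply: nbhs_right_ltW; exact: ltr01.
have := cF y z h; rewrite h1 ltW //= => /(_ isT).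
have -> : h *: y + (1 - h) *: z = h *: (y - z) + z.
  by rewrite scalerBr scalerBl scale1r addrCA addrC.
move=> Hc; rewrite /= /shift -[leLHS]/(h^-1 * _) ler_pdivrMl //; nra.
Unshelve. all: by end_near.
Qed.

Lemma convex_grad_le F z y : convex_fun R n F -> differentiable F z ->
  F z + dotv (grad R n F z) (y - z) <= F y.
Proof. by rewrite -diff_dotv_grad; exact: convex_diff_le. Qed.

Lemma convex_avg_le F (X : nat -> 'rV[R]_n) (T : nat) :
  convex_fun R n F -> (0 < T)%N ->
  F ((T%:R)^-1 *: \sum_(k < T) X k) <= (T%:R)^-1 * \sum_(k < T) F (X k).
Proof.
move=> cF; elim: T => // -[_ _|T IH _].
  by rewrite !big_ord1 invr1 scale1r mul1r.
rewrite big_ord_recr [X in _ <= _ * X]big_ord_recr /=.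
set m := T.+1; set t : R := (m.+1%:R)^-1.
have ct : (1 - t) * (m%:R)^-1 = t.
  by rewrite /t -natr1; field; rewrite natr1 !pnatr_eq0.
have t01 : 0 <= t <= 1 by rewrite invr_ge0 ler0n invf_le1 ?ltr0n // ler1n.
have -> : t *: (\sum_(i < m) X i + X m)
    = t *: X m + (1 - t) *: ((m%:R)^-1 *: \sum_(i < m) X i).
  by rewrite scalerA ct scalerDr addrC.
apply: le_trans (cF _ _ _ t01) _.
rewrite mulrDr addrC lerD2r.
have t1 : 0 <= 1 - t by lra.
by apply: le_trans (ler_wpM2l t1 (IH isT)) _; rewrite mulrA ct.
Qed.

End Euclidean.

Section Blocks.
Variables (R : realType) (n J : nat) (blk : 'I_n -> 'I_J).
Local Notation restr := (restr R n J blk).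
Local Notation blockT := (blockT n J blk).
Local Notation bvec := (bvec R n J blk).
Local Notation gsum := (gsum R n J blk).
Implicit Types (x y z : 'rV[R]_n).

Lemma sum_blockT j (h : 'I_n -> R) :
  \sum_(k : blockT j) h (val k) = \sum_(k | blk k == j) h k.
Proof.
rewrite [RHS](reindex_omap (val : blockT j -> 'I_n) insub); last first.
  by move=> k jk; rewrite insubT.
by apply: eq_bigl => -[k jk]; rewrite valK eqxx andbT.
Qed.

Lemma sum_blocks (h : 'I_n -> R) :
  \sum_j \sum_(k : blockT j) h (val k) = \sum_k h k.
Proof.
under eq_bigr do rewrite sum_blockT.
by rewrite [RHS](partition_big blk predT).
Qed.

Lemma sum_blocks_bgrad (F : 'rV[R]_n -> R) z y :
  \sum_j \sum_(k : blockT j) bgrad R n J blk F z j k * (restr z j k - restr y j k)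
    = - dotv (grad R n F z) (y - z).
Proof.
rewrite (sum_blocks (fun k => grad R n F z ord0 k * (z ord0 k - y ord0 k))).
by rewrite /dotv -sumrN; apply: eq_bigr => k _; rewrite !mxE; ring.
Qed.

Lemma sum_restr_sqr_le x j : \sum_(k : blockT j) restr x j k ^+ 2 <= sqnorm x.
Proof.
rewrite (sum_blockT j (fun k => x ord0 k ^+ 2)) big_mkcond.
by apply: ler_sum => k _; case: ifP => // _; exact: sqr_ge0.
Qed.

Definition same_off_block j z z' := forall k, blk k != j -> z' ord0 k = z ord0 k.

Lemma sum_restr_sqrB x z z' j : same_off_block j z z' ->
  \sum_(k : blockT j) ((restr x j k - restr z j k) ^+ 2 - (restr x j k - restr z' j k) ^+ 2)
    = sqnorm (x - z) - sqnorm (x - z').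
Proof.
move=> zz'; rewrite (sum_blockT j (fun k => (x ord0 k - z ord0 k) ^+ 2 - (x ord0 k - z' ord0 k) ^+ 2)).
rewrite -sumrB big_mkcond; apply: eq_bigr => k _; rewrite !mxE.
by case: eqP => // /eqP jk; rewrite zz' // subrr.
Qed.

Lemma gsumB (gj : forall j, bvec j -> R) z z' j : same_off_block j z z' ->
  gsum gj z' - gsum gj z = gj j (restr z' j) - gj j (restr z j).
Proof.
move=> zz'; rewrite /gsum -sumrB (bigD1 j) //= big1 ?addr0 // => j' j'j.
suff -> : restr z' j' = restr z j' by rewrite subrr.
by apply: funext => -[k kj']; rewrite /Defs.restr zz' //= (eqP kj').
Qed.

Lemma prox_objectiveE j (u p q : bvec j) (G e : R) :
  bdot R n J blk j u p + G + e / 2 * bnorm2 R n J blk j (fun k => p k - q k) ^+ 2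
    = \sum_k (u k * p k + e / 2 * (p k - q k) ^+ 2) + G.
Proof.
rewrite /bnorm2 sqr_sqrtr; last by apply: sumr_ge0 => k _; exact: sqr_ge0.
by rewrite big_split /= -mulr_sumr /bdot; ring.
Qed.

Lemma convex_gsum (gj : forall j, bvec j -> R) :
  (forall j, convex_bfun R n J blk j (gj j)) -> convex_fun R n (gsum gj).
Proof.
move=> gj_convex a b t t01; rewrite /gsum !mulr_sumr -big_split.
apply: ler_sum => j _; have := gj_convex j (restr a j) (restr b j) t t01.
congr (gj j _ <= _); apply: funext => k.
by rewrite /Defs.restr !mxE.
Qed.

End Blocks.

Section ProxThreePoint.
Variables (R : realFieldType) (K : finType) (G : (K -> R) -> R).
Hypothesis G_convex : forall (a b : K -> R) (t : R), 0 <= t <= 1 ->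
  G (fun k => t * a k + (1 - t) * b k) <= t * G a + (1 - t) * G b.
Variables (u p q : K -> R) (eta : R).
Hypothesis eta_gt0 : 0 < eta.
Hypothesis p_min : forall w : K -> R,
  \sum_k (u k * p k + eta / 2 * (p k - q k) ^+ 2) + G p
    <= \sum_k (u k * w k + eta / 2 * (w k - q k) ^+ 2) + G w.

Lemma prox_optimality (y : K -> R) :
  0 <= \sum_k (u k + eta * (p k - q k)) * (y k - p k) + G y - G p.
Proof.
pose B := \sum_k eta / 2 * (y k - p k) ^+ 2.
have B0 : 0 <= B.
  by apply: sumr_ge0 => k _; rewrite mulr_ge0 ?sqr_ge0 ?divr_ge0 ?(ltW eta_gt0).
apply: (ge0_of_small_quadratic B0) => s s0 s1.
have /(G_convex y p) Gs : 0 <= s <= 1 by rewrite (ltW s0) s1.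
have := p_min (fun k => s * y k + (1 - s) * p k).
have -> : \sum_k (u k * (s * y k + (1 - s) * p k)
            + eta / 2 * (s * y k + (1 - s) * p k - q k) ^+ 2)
    = \sum_k (u k * p k + eta / 2 * (p k - q k) ^+ 2)
      + s * \sum_k (u k + eta * (p k - q k)) * (y k - p k) + s ^+ 2 * B.
  by rewrite /B !mulr_sumr -!big_split; apply: eq_bigr => k _ /=; field.
nra.
Qed.

Lemma prox_three_point (y : K -> R) :
  \sum_k u k * (q k - y k) + G p - G y
    <= \sum_k (eta / 2 * ((y k - q k) ^+ 2 - (y k - p k) ^+ 2) + u k ^+ 2 / (2 * eta)).
Proof.
have := prox_optimality y.
suff : \sum_k u k * (q k - y k) + \sum_k (u k + eta * (p k - q k)) * (y k - p k)
    <= \sum_k (eta / 2 * ((y k - q k) ^+ 2 - (y k - p k) ^+ 2) + u k ^+ 2 / (2 * eta)).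
  by lra.
rewrite -big_split; apply: ler_sum => k _ /=; rewrite -subr_ge0.
have -> : eta / 2 * ((y k - q k) ^+ 2 - (y k - p k) ^+ 2) + u k ^+ 2 / (2 * eta)
    - (u k * (q k - y k) + (u k + eta * (p k - q k)) * (y k - p k))
    = (u k - eta * (q k - p k)) ^+ 2 / (2 * eta).
  by field; rewrite gt_eqF.
by rewrite divr_ge0 ?sqr_ge0 // pmulr_rge0 // ltW.
Qed.

End ProxThreePoint.

Section TupleSet.
Variables (A : finType) (T : nat).
Implicit Types (s : T.-tuple A) (i : 'I_T) (a b : A).

Definition tuple_set s i a : T.-tuple A :=
  [tuple if k == i then a else tnth s k | k < T].

Lemma tnth_tuple_set s i a : tnth (tuple_set s i a) i = a.
Proof. by rewrite tnth_mktuple eqxx. Qed.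

Lemma tuple_set_set s i a b : tuple_set (tuple_set s i a) i b = tuple_set s i b.
Proof. by apply: eq_from_tnth => k; rewrite !tnth_mktuple; case: eqP. Qed.

Lemma tuple_set_tnth s i : tuple_set s i (tnth s i) = s.
Proof. by apply: eq_from_tnth => k; rewrite !tnth_mktuple; case: eqP => // ->. Qed.

Lemma tuple_set_eq s i a : (tuple_set s i a == s) = (tnth s i == a).
Proof.
apply/eqP/eqP => [<- | <-]; first exact: tnth_tuple_set.
exact: tuple_set_tnth.
Qed.

Lemma nth_tuple_set s i a d k :
  nth d (tuple_set s i a) k = if k == i :> nat then a else nth d s k.
Proof.
have [kT | Tk] := ltnP k T.
  by rewrite -[k]/(val (Ordinal kT)) -!tnth_nth tnth_mktuple.
rewrite !nth_default ?size_tuple // ifF //.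
by apply/negbTE; rewrite neq_ltn (leq_trans (ltn_ord i) Tk) orbT.
Qed.

(* for fixed [a], [tuple_set _ i a] hits each tuple with [i]-th entry [a] exactly [#|A|] times *)
Lemma sum_tuple_set (R : pzRingType) i (H : T.-tuple A -> R) :
  \sum_s \sum_a H (tuple_set s i a) = #|A|%:R * \sum_s H s.
Proof.
have slice a : \sum_s H (tuple_set s i a) = #|A|%:R * \sum_(s | tnth s i == a) H s.
  rewrite (partition_big (fun s => tnth s i) predT) //= -sum1_card natr_sum mulr_suml.
  apply: eq_bigr => b _; rewrite mul1r.
  rewrite [RHS](reindex_onto (fun s => tuple_set s i a) (fun s => tuple_set s i b)) /=.
    by apply: eq_bigl => s; rewrite tnth_tuple_set eqxx tuple_set_set tuple_set_eq.
  by move=> s /eqP <-; rewrite tuple_set_set tuple_set_tnth.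
rewrite exchange_big /= (eq_bigr _ (fun a _ => slice a)) -mulr_sumr.
by rewrite [in RHS](partition_big (fun s => tnth s i) predT).
Qed.

End TupleSet.

Section Expectation.
Variables (R : realType) (A : finType) (d : A) (T : nat).
Local Notation Exp := (Exp R A d T).
Implicit Types (X Y : (nat -> A) -> R).

Lemma Exp_weight_gt0 : 0 < ((#|A|%:R : R) ^+ T)^-1.
Proof. by rewrite invr_gt0 exprn_gt0 // ltr0n; apply/card_gt0P; exists d. Qed.

Lemma Exp_ler X Y : (forall c, X c <= Y c) -> Exp X <= Exp Y.
Proof.
move=> XY; rewrite /Exp ler_pM2l ?Exp_weight_gt0 //.
by apply: ler_sum => s _; exact: XY.
Qed.

Lemma Exp_affine (a b : R) X : Exp (fun c => a + b * X c) = a + b * Exp X.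
Proof.
have N0 : (#|A|%:R : R) ^+ T != 0 by rewrite -invr_eq0 gt_eqF ?Exp_weight_gt0.
rewrite /Exp big_split /= sumr_const card_tuple -mulr_sumr mulrDr mulrCA.
by rewrite -[a *+ _]mulr_natl natrX mulKf.
Qed.

Lemma Exp_sum (m : nat) (X : nat -> (nat -> A) -> R) :
  Exp (fun c => \sum_(t < m) X t c) = \sum_(t < m) Exp (X t).
Proof. by rewrite /Exp exchange_big mulr_sumr. Qed.

Lemma Exp_le0_resample (i : 'I_T) X :
  (forall s : T.-tuple A, \sum_a X (fun k => nth d (tuple_set s i a) k) <= 0) ->
  Exp X <= 0.
Proof.
move=> Xs; rewrite /Exp pmulr_rle0 ?Exp_weight_gt0 //.
have A0 : 0 < (#|A|%:R : R) by rewrite ltr0n; apply/card_gt0P; exists d.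
rewrite -(pmulr_rle0 _ A0) -(sum_tuple_set i (fun s => X (fun k => nth d s k))).
by apply: sumr_le0 => s _; exact: Xs.
Qed.

End Expectation.

Lemma eq_iterates (R : realType) (n J I : nat) step (c c' : nat -> 'I_I * 'I_J) t :
  (forall k, (k < t)%N -> c k = c' k) ->
  iterates R n J I step c t = iterates R n J I step c' t.
Proof.
elim: t => //= t IH cc'; rewrite cc' // IH // => k kt.
by apply: cc'; exact: ltnW.
Qed.

Section StepSize.
Variables (R : realType) (L : R).
Hypothesis L_ge0 : 0 <= L.
Local Notation eta := (Defs.eta R L).

Lemma sqrt_le_eta t : Num.sqrt t%:R <= eta t.
Proof. by rewrite lerDl. Qed.

Lemma eta_gt0 t : (0 < t)%N -> 0 < eta t.
Proof. by move=> t0; apply: lt_le_trans (sqrt_le_eta t); rewrite sqrtr_gt0 ltr0n. Qed.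

Lemma eta_ge0 t : 0 <= eta t.
Proof. exact: le_trans (sqrtr_ge0 _) (sqrt_le_eta t). Qed.

Lemma eta_le_eta t : eta t <= eta t.+1.
Proof. by rewrite lerD2r ler_sqrt ?ler0n // ler_nat. Qed.

Lemma inv_eta_le t c : (0 < t)%N -> 0 <= c ->
  c / (2 * eta t) <= c * (2 * Num.sqrt t%:R)^-1.
Proof.
move=> t0 c0; apply: ler_wpM2l => //.
rewrite lef_pV2 ?posrE ?mulr_gt0 ?eta_gt0 ?sqrtr_gt0 ?ltr0n //.
by rewrite ler_pM2l // sqrt_le_eta.
Qed.

Lemma sum_inv_eta_le (c : R) T : 0 <= c -> (0 < T)%N ->
  \sum_(t < T) c / (2 * eta t.+1) + c / (2 * eta T) <= Num.sqrt T%:R * c.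
Proof.
move=> c0 T0; rewrite [leRHS]mulrC; apply: le_trans _ (ler_wpM2l c0 (@sum_inv_sqrt_le R T T0)).
rewrite [leRHS]mulrDr mulr_sumr lerD ?inv_eta_le //.
by apply: ler_sum => t _; rewrite inv_eta_le.
Qed.

End StepSize.

Section ORBCD.
Variables (R : realType) (n I J : nat) (blk : 'I_n -> 'I_J).
Variables (fi : 'I_I -> 'rV[R]_n -> R) (gj : forall j : 'I_J, bvec R n J blk j -> R).
Arguments gj : clear implicits.
Hypothesis fi_convex : forall i, convex_fun R n (fi i).
Hypothesis fi_diff : forall i (x : 'rV[R]_n), differentiable (fi i) x.
Hypothesis gj_convex : forall j, convex_bfun R n J blk j (gj j).
Hypotheses (I_gt0 : (0 < I)%N) (J_gt0 : (0 < J)%N).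
Arguments fi_convex : clear implicits.
Arguments fi_diff : clear implicits.
Arguments gj_convex : clear implicits.

Local Notation restr := (restr R n J blk).
Local Notation blockT := (blockT n J blk).
Local Notation g := (gsum R n J blk gj).
Local Notation grad := (grad R n).

Definition favg (y : 'rV[R]_n) : R := (I%:R)^-1 * \sum_i fi i y.
Definition composite (y : 'rV[R]_n) : R := favg y + g y.

Variable xstar : 'rV[R]_n.
Hypothesis xstar_min : forall y, composite xstar <= composite y.

Variables (L Rf : R) (step : nat -> 'I_I -> 'I_J -> 'rV[R]_n -> 'rV[R]_n).
Hypothesis step_orbcd : forall t i j x, orbcd_step R n J blk L gj (fi i) t j x (step t i j x).
Arguments step_orbcd : clear implicits.

Lemma block_step_le t i j (z : 'rV[R]_n) :
  0 < Defs.eta R L t -> norm2 R n (grad (fi i) z) <= Rf ->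
  \sum_(k : blockT j) bgrad R n J blk (fi i) z j k * (restr z j k - restr xstar j k)
    + (gj j (restr z j) - gj j (restr xstar j)) + (g (step t i j z) - g z)
  <= Defs.eta R L t / 2 * (sqnorm (xstar - z) - sqnorm (xstar - step t i j z))
     + Rf ^+ 2 / (2 * Defs.eta R L t).
Proof.
move=> eta_gt0 gradRf; have [same_off z'_min] := step_orbcd t i j z.
set e := Defs.eta R L t; set u := bgrad R n J blk (fi i) z j.
set p := restr (step t i j z) j; set q := restr z j; set y := restr xstar j.
have p_min w : \sum_k (u k * p k + e / 2 * (p k - q k) ^+ 2) + gj j p
    <= \sum_k (u k * w k + e / 2 * (w k - q k) ^+ 2) + gj j w.
  by have := z'_min w; rewrite -!prox_objectiveE.
have := prox_three_point (gj_convex j) eta_gt0 p_min y.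
rewrite big_split /= -mulr_sumr -mulr_suml sum_restr_sqrB //.
have : \sum_k u k ^+ 2 <= Rf ^+ 2.
  by apply: le_trans (sqnorm_le_sqr gradRf); exact: sum_restr_sqr_le.
rewrite -(ler_pM2r (_ : 0 < (2 * e)^-1)) ?invr_gt0 ?mulr_gt0 //.
by rewrite (gsumB _ same_off) -/e; lra.
Qed.

Definition step_residual t (z z' : 'rV[R]_n) : R :=
  (J%:R)^-1 * (composite z - composite xstar) + (g z' - g z)
  - Defs.eta R L t / 2 * (sqnorm (xstar - z) - sqnorm (xstar - z'))
  - Rf ^+ 2 / (2 * Defs.eta R L t).

Lemma sum_favgB (z y : 'rV[R]_n) : \sum_i (fi i z - fi i y) = I%:R * (favg z - favg y).
Proof.
by rewrite sumrB /favg -mulrBr mulrA divff ?mul1r // pnatr_eq0 -lt0n.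
Qed.

Lemma expected_step_residual_le0 t (z : 'rV[R]_n) :
  0 < Defs.eta R L t -> (forall i, norm2 R n (grad (fi i) z) <= Rf) ->
  \sum_(a : 'I_I * 'I_J) step_residual t z (step t a.1 a.2 z) <= 0.
Proof.
move=> eta_gt0 gradRf.
pose Q i j := \sum_(k : blockT j) bgrad R n J blk (fi i) z j k * (restr z j k - restr xstar j k)
  + (gj j (restr z j) - gj j (restr xstar j)).
have res_le (a : 'I_I * 'I_J) : step_residual t z (step t a.1 a.2 z)
    <= (J%:R)^-1 * (composite z - composite xstar) - Q a.1 a.2.
  by have := block_step_le a.2 eta_gt0 (gradRf a.1); rewrite /step_residual /Q; lra.
have sumQ i : fi i z - fi i xstar + (g z - g xstar) <= \sum_j Q i j.
  rewrite big_split /= sum_blocks_bgrad /Defs.gsum sumrB lerD2r.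
  by have := convex_grad_le xstar (fi_convex i) (fi_diff i z); lra.
apply: le_trans (ler_sum _ (fun a _ => res_le a)) _.
rewrite sumrB sumr_const card_prod !card_ord -(pair_bigA _ Q) /= subr_le0.
have : \sum_i (fi i z - fi i xstar + (g z - g xstar)) <= \sum_i \sum_j Q i j.
  by apply: ler_sum => i _; exact: sumQ.
rewrite big_split /= sum_favgB sumr_const card_ord.
suff -> : (J%:R)^-1 * (composite z - composite xstar) *+ (I * J)
    = I%:R * (favg z - favg xstar) + (g z - g xstar) *+ I by [].
rewrite -[_ *+ (I * J)]mulr_natl -[_ *+ I]mulr_natl natrM /composite.
by field; rewrite pnatr_eq0 -lt0n.
Qed.

Lemma favg_gap_ge (z : 'rV[R]_n) (e : R) :
  0 < e -> (forall i, norm2 R n (grad (fi i) z) <= Rf) ->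
  - (Rf ^+ 2 / (2 * e) + e / 2 * sqnorm (xstar - z)) <= favg xstar - favg z.
Proof.
move=> e0 gradRf; set K := _ + _.
have fi_gap i : - K <= fi i xstar - fi i z.
  have := convex_grad_le xstar (fi_convex i) (fi_diff i z).
  have := dotv_ge_young (grad (fi i) z) (xstar - z) e0.
  have : sqnorm (grad (fi i) z) / (2 * e) <= Rf ^+ 2 / (2 * e).
    by rewrite ler_pM2r ?invr_gt0 ?mulr_gt0 // sqnorm_le_sqr.
  by rewrite /K; lra.
have I0 : 0 < (I%:R : R) by rewrite ltr0n.
have : \sum_(i < I) - K <= \sum_i (fi i xstar - fi i z) by apply: ler_sum => i _; exact: fi_gap.
by rewrite sumr_const card_ord -mulr_natl sum_favgB ler_pM2l.
Qed.

Hypothesis L_ge0 : 0 <= L.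
Variables (D : R) (Xset : set 'rV[R]_n).
Local Notation X := (iterates R n J I step).
Hypothesis iter_in_X : forall c t, Xset (X c t).
Hypothesis xstar_in_X : Xset xstar.
Hypothesis diamX : forall a b, Xset a -> Xset b -> norm2 R n (a - b) <= D.
Hypothesis grad_bnd : forall c t i, norm2 R n (grad (fi i) (X c t)) <= Rf.
Arguments grad_bnd : clear implicits.

(* [X c t] is the paper's [x^(t+1)]; it is updated with step size [eta (t + 1)]. *)
Definition path_residual (c : nat -> 'I_I * 'I_J) t := step_residual t.+1 (X c t) (X c t.+1).

Definition rate_const T :=
  Defs.eta R L T / 2 * D ^+ 2 + Num.sqrt T%:R * Rf ^+ 2 + g 0 - g xstar.

Lemma sum_path_residualE c T : \sum_(t < T) path_residual c t
  = (J%:R)^-1 * (\sum_(t < T) composite (X c t) - T%:R * composite xstar) + (g (X c T) - g 0)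
    - \sum_(t < T) Defs.eta R L t.+1 / 2 * (sqnorm (xstar - X c t) - sqnorm (xstar - X c t.+1))
    - \sum_(t < T) Rf ^+ 2 / (2 * Defs.eta R L t.+1).
Proof.
rewrite /path_residual /step_residual !sumrB big_split /= -mulr_sumr sumrB sumr_const card_ord.
by rewrite -[_ *+ T]mulr_natl -(big_mkord xpredT (fun t => g (X c t.+1) - g (X c t))) telescope_sumr.
Qed.

Lemma sum_path_residual_ge c T : (0 < T)%N ->
  (J%:R)^-1 * (\sum_(t < T) composite (X c t) - T%:R * composite xstar) - rate_const T
    <= \sum_(t < T) path_residual c t.
Proof.
move=> T0; rewrite sum_path_residualE /rate_const.
set eT := Defs.eta R L T; set dT := sqnorm (xstar - X c T).
have tele : \sum_(t < T) Defs.eta R L t.+1 / 2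
      * (sqnorm (xstar - X c t) - sqnorm (xstar - X c t.+1))
    <= eT / 2 * D ^+ 2 - eT / 2 * dT.
  apply: (sum_weighted_telescope_le (e := fun t => Defs.eta R L t / 2)
                                    (d := fun t => sqnorm (xstar - X c t))) => // t.
  - by rewrite divr_ge0 ?eta_ge0.
  - by rewrite ler_pM2r ?eta_le_eta.
  - by apply: sqnorm_le_sqr; apply: diamX.
have gT : - (Rf ^+ 2 / (2 * eT) + eT / 2 * dT) <= g (X c T) - g xstar.
  have := favg_gap_ge (eta_gt0 L_ge0 T0) (grad_bnd c T).
  by have := xstar_min (X c T); rewrite /composite -/eT -/dT; lra.
have := sum_inv_eta_le L_ge0 (sqr_ge0 Rf) T0.
by rewrite -/eT; lra.
Qed.

Lemma convex_composite : convex_fun R n composite.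
Proof.
move=> a b t t01; rewrite /composite.
suff : favg (t *: a + (1 - t) *: b) <= t * favg a + (1 - t) * favg b.
  by have := convex_gsum gj_convex a b t01; lra.
rewrite /favg mulrCA [X in _ <= _ + X]mulrCA -mulrDr ler_wpM2l ?invr_ge0 //.
by rewrite !mulr_sumr -big_split; apply: ler_sum => i _; exact: fi_convex.
Qed.

Lemma composite_xbar_le c T x : (0 < T)%N ->
  composite (xbar R n J I step c T) - composite x
    <= J%:R * (\sum_(t < T) path_residual c t + rate_const T) / T%:R.
Proof.
move=> T0; set P := \sum_(t < T) _; set S := \sum_(t < T) composite (X c t).
have J0 : 0 < (J%:R : R) by rewrite ltr0n.
have T0' : 0 < (T%:R : R) by rewrite ltr0n.
have jensen : composite (xbar R n J I step c T) * T%:R <= S.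
  by rewrite -ler_pdivlMr // mulrC; exact: convex_avg_le convex_composite T0.
have gap : S - T%:R * composite xstar <= J%:R * (P + rate_const T).
  rewrite -ler_pdivrMl //; have := sum_path_residual_ge c T0; rewrite -/P -/S; lra.
rewrite ler_pdivlMr //; have := xstar_min x; nra.
Qed.

Lemma expected_path_residual_le0 d0 T (t : 'I_T) :
  Exp R _ d0 T (fun c => path_residual c t) <= 0.
Proof.
apply: (Exp_le0_resample (i := t)) => s; pose c k := nth d0 s k.
have Xt a : X (fun k => nth d0 (tuple_set s t a) k) t = X c t.
  by apply: eq_iterates => k kt; rewrite nth_tuple_set (ltn_eqF kt).
have Xt1 a : X (fun k => nth d0 (tuple_set s t a) k) t.+1 = step t.+1 a.1 a.2 (X c t).
  by rewrite /= Xt nth_tuple_set eqxx.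
rewrite /path_residual; under eq_bigr do rewrite Xt1 Xt.
exact: expected_step_residual_le0 (eta_gt0 L_ge0 (ltn0Sn t)) (grad_bnd c t).
Qed.

Lemma expected_composite_xbar_le d0 T x : (0 < T)%N ->
  Exp R _ d0 T (fun c => composite (xbar R n J I step c T)) - composite x
    <= J%:R * rate_const T / T%:R.
Proof.
move=> T0.
have bound c : composite (xbar R n J I step c T)
    <= (composite x + J%:R * rate_const T / T%:R) + J%:R / T%:R * \sum_(t < T) path_residual c t.
  by have := composite_xbar_le c x T0; lra.
have : Exp R _ d0 T (fun c => composite (xbar R n J I step c T))
    <= Exp R _ d0 T (fun c => (composite x + J%:R * rate_const T / T%:R)
                             + J%:R / T%:R * \sum_(t < T) path_residual c t).
  exact: Exp_ler.
rewrite Exp_affine (Exp_sum _ _ _ (fun t c => path_residual c t)).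
have : \sum_(t < T) Exp R _ d0 T (fun c => path_residual c t) <= 0.
  by apply: sumr_le0 => t _; exact: expected_path_residual_le0.
have : 0 <= (J%:R : R) / T%:R by rewrite divr_ge0 ?ler0n.
nra.
Qed.

End ORBCD.

Theorem theorem3 (R : realType) (n I J : nat) (blk : 'I_n -> 'I_J)
  (blk_surj : forall j : 'I_J, exists k : 'I_n, blk k = j)
  (fi : 'I_I -> 'rV[R]_n -> R)
  (gj : forall j : 'I_J, bvec R n J blk j -> R)
  (fi_convex : forall i, @convex_fun R n (fi i))
  (fi_diff : forall i (x : 'rV[R]_n), differentiable (fi i) x)
  (gj_convex : forall j, @convex_bfun R n J blk j (gj j))
  (xstar : 'rV[R]_n)
  (xstar_min : forall y : 'rV[R]_n,
     (I%:R)^-1 * \sum_i fi i xstar + @gsum R n J blk gj xstar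
       <= (I%:R)^-1 * \sum_i fi i y + @gsum R n J blk gj y)
  (Lj : 'I_J -> R) (Lj_ge0 : forall j, 0 <= Lj j)
  (Lip : forall i j (x : 'rV[R]_n) (h : bvec R n J blk j),
     @bnorm2 R n J blk j (fun k => @bgrad R n J blk (fi i) (x + @ext R n J blk j h) j k
                      - @bgrad R n J blk (fi i) x j k)
       <= Lj j * @bnorm2 R n J blk j h)
  (step : nat -> 'I_I -> 'I_J -> 'rV[R]_n -> 'rV[R]_n)
  (Hstep : forall t i j (x : 'rV[R]_n),
     @orbcd_step R n J blk (\big[Num.max/0]_j Lj j) gj (fi i) t j x (step t i j x))
  (Rf D : R) (Xset : set 'rV[R]_n)
  (iter_in_X : forall (c : nat -> 'I_I * 'I_J) t, Xset (@iterates R n J I step c t))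
  (xstar_in_X : Xset xstar)
  (diamX : forall a b, Xset a -> Xset b -> @norm2 R n (a - b) <= D)
  (grad_bnd : forall (c : nat -> 'I_I * 'I_J) t i,
     @norm2 R n (@grad R n (fi i) (@iterates R n J I step c t)) <= Rf)
  (d0 : 'I_I * 'I_J) (T : nat) (T_gt0 : (0 < T)%N) (x : 'rV[R]_n) :
  let f := fun y => (I%:R)^-1 * \sum_i fi i y in
  let g := @gsum R n J blk gj in
  let L := \big[Num.max/0]_j Lj j in
  @Exp R _ d0 T (fun c => f (@xbar R n J I step c T) + g (@xbar R n J I step c T)) - (f x + g x)
    <= J%:R * ((Num.sqrt T%:R + L) / 2 * D ^+ 2 + Num.sqrt T%:R * Rf ^+ 2
               + g (@iterates R n J I step (fun _ => d0) 0) (* = g(x^1) = g(0) *) - g xstar) / T%:R.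
Proof.
have I_gt0 : (0 < I)%N := leq_ltn_trans (leq0n _) (ltn_ord d0.1).
have J_gt0 : (0 < J)%N := leq_ltn_trans (leq0n _) (ltn_ord d0.2).
have L_ge0 : 0 <= \big[Num.max/0]_j Lj j.
  by apply: (big_ind (fun y => 0 <= y)) => // a b; rewrite le_max => ->.
exact: (expected_composite_xbar_le fi_convex fi_diff gj_convex I_gt0 J_gt0 xstar_min
          Hstep L_ge0 iter_in_X xstar_in_X diamX grad_bnd d0 x T_gt0).
Qed.
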